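(* Let $R=\mathbb{Z}_4+u\mathbb{Z}_4$ with $u^2=0$. Let $\tau:R^n\to R^n$ be the $(1+2u)$-constacyclic shift $\tau(c_0,\dots,c_{n-1})=((1+2u)c_{n-1},c_0,\dots,c_{n-2})$, let $\sigma:\mathbb{Z}_4^{2n}\to\mathbb{Z}_4^{2n}$ be the cyclic shift $\sigma(x_0,\dots,x_{2n-1})=(x_{2n-1},x_0,\dots,x_{2n-2})$, and let $\phi:R^n\to\mathbb{Z}_4^{2n}$ be the Gray map $\phi(c_0,\dots,c_{n-1})=(b_0,\dots,b_{n-1},2a_0+b_0,\dots,2a_{n-1}+b_{n-1})$ where $c_i=a_i+ub_i$ with $a_i,b_i\in\mathbb{Z}_4$. Then $\phi\circ\tau=\sigma\circ\phi$. *)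

From mathcomp Require Import all_boot all_algebra.
Set Implicit Arguments. Unset Strict Implicit. Unset Printing Implicit Defensive.
Import GRing.Theory.
Local Open Scope ring_scope.

(* The ring R = Z_4 + u Z_4 with u^2 = 0: the pair (a, b) represents a + u b. *)
Definition R := ('Z_4 * 'Z_4)%type.
Definition R_add (x y : R) : R := (x.1 + y.1, x.2 + y.2).
Definition R_mul (x y : R) : R := (x.1 * y.1, x.1 * y.2 + x.2 * y.1).
Definition one_plus_2u : R := (1, 2%:R).

(* (1+2u)-constacyclic shift on R^n:
   tau (c_0,...,c_{n-1}) = ((1+2u) c_{n-1}, c_0, ..., c_{n-2}).
   ord_pred i is i-1 mod n. *)
Definition tau n (c : {ffun 'I_n -> R}) : {ffun 'I_n -> R} :=
  [ffun i : 'I_n => if (i : nat) == 0%N then R_mul one_plus_2u (c (ord_pred i))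
                    else c (ord_pred i)].

Definition sigma m (x : {ffun 'I_m -> 'Z_4}) : {ffun 'I_m -> 'Z_4} :=
  [ffun k : 'I_m => x (ord_pred k)].

Definition gray n (c : {ffun 'I_n -> R}) : {ffun 'I_(n + n) -> 'Z_4} :=
  [ffun k : 'I_(n + n) => match split k with
                         | inl i => (c i).2
                         | inr i => 2%:R * (c i).1 + (c i).2
                         end].

(** Multiplication by 1 + 2u maps a + ub to a + u(b + 2a).  Under the Gray
    map, the wrap-around coordinate c_{n-1} of the constacyclic shift therefore
    contributes b_{n-1} + 2a_{n-1} to the first half, which is exactly the last
    coordinate of the Gray image, and 2a_{n-1} + (b_{n-1} + 2a_{n-1}) = b_{n-1}
    to the second half, since 4 = 0 in Z_4.  All other coordinates move by one
    place inside their half, as the cyclic shift of Z_4^(2n) prescribes. *)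
From mathcomp Require Import all_boot all_algebra.
From mathcomp Require Import zify.
Import GRing.Theory.
Local Open Scope ring_scope.

Lemma val_ord_pred {m} (i : 'I_m) :
  ord_pred i = (if (i : nat) == 0%N then m.-1 else i.-1)%N :> nat.
Proof.
case: i => i lt_i_m /=; case: eqP => [->|/eqP i_neq0].
  by rewrite add0n modn_small //; lia.
by rewrite -subn1 addnC -addnBA ?modnDl ?modn_small //; lia.
Qed.

Lemma ord_pred_lshift n (i : 'I_n) :
  ord_pred (lshift n i) =
    if (i : nat) == 0%N then rshift n (ord_pred i) else lshift n (ord_pred i).
Proof.
(* [clearbody] keeps [/=] from unfolding [ord_pred i] into its [modn] form. *)
set j := ord_pred i.
have val_j : j = (if (i : nat) == 0%N then n.-1 else i.-1)%N :> nat := val_ord_pred i.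
clearbody j.
have := ltn_ord i; case: ifP => ? ?; apply: ord_inj;
  rewrite val_ord_pred /= val_j; (repeat case: ifP => ?); lia.
Qed.

Lemma ord_pred_rshift n (i : 'I_n) :
  ord_pred (rshift n i) =
    if (i : nat) == 0%N then lshift n (ord_pred i) else rshift n (ord_pred i).
Proof.
set j := ord_pred i.
have val_j : j = (if (i : nat) == 0%N then n.-1 else i.-1)%N :> nat := val_ord_pred i.
clearbody j.
have := ltn_ord i; case: ifP => ? ?; apply: ord_inj;
  rewrite val_ord_pred /= val_j; (repeat case: ifP => ?); lia.
Qed.

Lemma gray_lshift n (c : {ffun 'I_n -> R}) (i : 'I_n) :
  gray c (lshift n i) = (c i).2.
Proof. by rewrite ffunE (unsplitK (inl _ i)). Qed.

Lemma gray_rshift n (c : {ffun 'I_n -> R}) (i : 'I_n) :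
  gray c (rshift n i) = 2%:R * (c i).1 + (c i).2.
Proof. by rewrite ffunE (unsplitK (inr _ i)). Qed.

Lemma R_mul_one_plus_2u (x : R) :
  R_mul one_plus_2u x = (x.1, x.2 + 2%:R * x.1).
Proof. by rewrite /R_mul /= !mul1r. Qed.

Lemma Zp4_double_add_double (x : 'Z_4) : 2%:R * x + 2%:R * x = 0.
Proof. by rewrite -mulrDl (_ : 2%:R + 2%:R = 0 :> 'Z_4) ?mul0r //; apply: val_inj. Qed.

Theorem proposition5p1 (n : nat) (c : {ffun 'I_n -> R}) :
  gray (tau c) = sigma (gray c).
Proof.
apply/ffunP => k; rewrite -(splitK k); case: (split k) => i {k} /=.
  rewrite gray_lshift [tau c i]ffunE [sigma _ _]ffunE ord_pred_lshift.
  by case: ifP => _; rewrite ?R_mul_one_plus_2u ?gray_rshift ?gray_lshift // addrC.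
rewrite gray_rshift [tau c i]ffunE [sigma _ _]ffunE ord_pred_rshift.
case: ifP => _; rewrite ?R_mul_one_plus_2u ?gray_rshift ?gray_lshift //=.
by rewrite addrCA Zp4_double_add_double addr0.
Qed.
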